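(* The relation $\le$ on isomorphism classes of codes, defined by $[\mathcal{D}]\le[\mathcal{C}]$ if and only if some finite (possibly empty) sequence of operations takes $\mathcal{C}$ to a code isomorphic to $\mathcal{D}$, is a well-defined partial order on the set of isomorphism classes of codes.
   Context: A code is a subset $\mathcal{C}\subseteq 2^{[n]}$. For $\sigma\subseteq[n]$, $\mathrm{Tk}_{\mathcal{C}}(\sigma)=\{c\in\mathcal{C}\mid\sigma\subseteq c\}$; a trunk in $\mathcal{C}$ is a subset that is empty or of this form (a trunk is itself regarded as a code in $2^{[n]}$). A function $f:\mathcal{C}\to\mathcal{D}$ between codes is a morphism if preimages of trunks in $\mathcal{D}$ are trunks in $\mathcal{C}$; an isomorphism is a morphism with an inverse function that is also a morphism. An operation on a code $\mathcal{C}$ is either replacing $\mathcal{C}$ by its image $f(\mathcal{C})$ under some morphism $f$ with domain $\mathcal{C}$, or replacing $\mathcal{C}$ by one of its trunks. *)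

From mathcomp Require Import all_boot.
Unset Printing Implicit Defensive.

Record code := Code { cdim : nat; cwords : {set {set 'I_cdim}} }.

Definition Tk (n : nat) (C : {set {set 'I_n}}) (sigma : {set 'I_n}) : {set {set 'I_n}} :=
  [set c in C | sigma \subset c].

Definition is_trunk (n : nat) (C T : {set {set 'I_n}}) : Prop :=
  T = set0 \/ exists sigma : {set 'I_n}, T = Tk _ C sigma.

(* f : C -> D is a morphism (f is given as a function on 2^[n], only its
   restriction to C matters): f maps C into D, and preimages of trunks of D
   are trunks of C. *)
Arguments Code : clear implicits.
Definition is_morphism (C D : code) (f : {set 'I_(cdim C)} -> {set 'I_(cdim D)}) : Prop :=
  (forall c, c \in cwords C -> f c \in cwords D) /\
  (forall T, is_trunk _ (cwords D) T -> is_trunk _ (cwords C) [set c in cwords C | f c \in T]).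

Definition code_iso (C D : code) : Prop :=
  exists (f : {set 'I_(cdim C)} -> {set 'I_(cdim D)})
         (g : {set 'I_(cdim D)} -> {set 'I_(cdim C)}),
    [/\ is_morphism C D f, is_morphism D C g,
        (forall c, c \in cwords C -> g (f c) = c) &
        (forall d, d \in cwords D -> f (g d) = d)].

Inductive operation : code -> code -> Prop :=
| op_image (C D : code) (f : {set 'I_(cdim C)} -> {set 'I_(cdim D)}) :
    is_morphism C D f -> operation C (Code (cdim D) (f @: cwords C))
| op_trunk (C : code) (T : {set {set 'I_(cdim C)}}) :
    is_trunk _ (cwords C) T -> operation C (Code (cdim C) T).

Inductive reach : code -> code -> Prop :=
| reach_refl (C : code) : reach C C
| reach_step (C C' C'' : code) : operation C C' -> reach C' C'' -> reach C C''.

(* code_le D C  <->  [D] <= [C]: some finite sequence of operations takes C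
   to a code isomorphic to D. *)
Definition code_le (D C : code) : Prop :=
  exists E : code, reach C E /\ code_iso E D.

(* Every operation weakly decreases both the number of codewords and the number
   of trunks of a code: an image under a morphism has at most as many words,
   and pulling back trunks along the morphism injects the trunks of the image
   into those of the domain; a trunk of C has fewer words, and its trunks are
   trunks of C. If an operation keeps both numbers, the morphism is injective
   and pulling back is onto, so the operation is an isomorphism; a trunk with
   as many words is the whole code. Isomorphisms are themselves operations, so
   along a cycle C -> ... -> D ~ ... -> C both numbers stay constant and every
   step is an isomorphism. *)
From mathcomp Require Import all_boot.

Set Implicit Arguments.

Lemma trunk_subset n (C T : {set {set 'I_n}}) : is_trunk n C T -> T \subset C.
Proof.
case=> [->|[s ->]]; first exact: sub0set.
by apply/subsetP => c; rewrite inE => /andP[].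
Qed.

Definition trunks n (C : {set {set 'I_n}}) : {set {set {set 'I_n}}} :=
  [set T | (T == set0) || [exists s, T == Tk n C s]].

Lemma trunksP n C T : reflect (is_trunk n C T) (T \in trunks C).
Proof.
rewrite inE; apply: (iffP orP).
  by case=> [/eqP->|/existsP[s /eqP->]]; [left | right; exists s].
by case=> [->|[s ->]]; [left | right; apply/existsP; exists s].
Qed.

Lemma trunk_trunk n (C T U : {set {set 'I_n}}) :
  is_trunk n C T -> is_trunk n T U -> is_trunk n C U.
Proof.
move=> Tt [->|[s ->]]; first by left.
case: Tt => [->|[t ->]].
  by left; apply/setP => c; rewrite !inE.
right; exists (s :|: t); apply/setP => c; rewrite !inE subUset.
by case: (c \in C); case: (s \subset c); case: (t \subset c).
Qed.

Lemma morphism_mem C D f c : is_morphism C D f -> c \in cwords C -> f c \in cwords D.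
Proof. by case=> + _; apply. Qed.

Lemma morphism_id C : is_morphism C C id.
Proof.
split=> // T Tt; suff -> : [set c in cwords C | id c \in T] = T by [].
apply/setP => c; rewrite inE /=; case cT: (c \in T); last by rewrite andbF.
by rewrite (subsetP (trunk_subset Tt) _ cT).
Qed.

Lemma morphism_comp C D E f g : is_morphism C D f -> is_morphism D E g ->
  is_morphism C E (g \o f).
Proof.
case=> fC fT [gD gT]; split=> [c cC|T Tt]; first exact/gD/fC.
suff -> : [set c in cwords C | (g \o f) c \in T] =
  [set c in cwords C | f c \in [set d in cwords D | g d \in T]] by exact/fT/gT.
by apply/setP => c; rewrite !inE; case cC: (c \in cwords C); rewrite //= fC.
Qed.

Lemma code_iso_refl C : code_iso C C.
Proof. by exists id, id; split=> //; apply: morphism_id. Qed.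

Lemma code_iso_sym C D : code_iso C D -> code_iso D C.
Proof. by case=> f [g [? ? ? ?]]; exists g, f. Qed.

Lemma code_iso_trans C D E : code_iso C D -> code_iso D E -> code_iso C E.
Proof.
case=> f [g [fM gM gf fg]] [f' [g' [fM' gM' gf' fg']]].
exists (f' \o f), (g \o g'); split.
- exact: morphism_comp fM fM'.
- exact: morphism_comp gM' gM.
- by move=> c cC /=; rewrite gf' ?gf //; exact: morphism_mem fM cC.
- by move=> d dD /=; rewrite fg ?fg' //; exact: morphism_mem gM' dD.
Qed.

Lemma reach_trans C D E : reach C D -> reach D E -> reach C E.
Proof. by elim=> // C0 C1 C2 o _ IH /IH; apply: reach_step. Qed.

Lemma reach_iso C D : code_iso C D -> reach C D.
Proof.
case=> f [g [fM gM _ fg]].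
have imf : f @: cwords C = cwords D.
  apply/setP => d; apply/imsetP/idP => [[c cC ->]|dD]; first exact: morphism_mem fM cC.
  by exists (g d); [apply: morphism_mem gM dD | rewrite fg].
apply: reach_step (op_image C D f fM) _.
by rewrite imf; case: D f g fM gM fg imf => *; apply: reach_refl.
Qed.

Section MorphismImage.
Variables (C D : code) (f : {set 'I_(cdim C)} -> {set 'I_(cdim D)}).
Hypothesis fM : is_morphism C D f.

Let W := f @: cwords C.
Let image := Code (cdim D) W.

Definition pretrunk (T : {set {set 'I_(cdim D)}}) := [set c in cwords C | f c \in T].

Lemma pretrunk_image T : is_trunk _ W T -> is_trunk _ (cwords C) (pretrunk T).
Proof.
case: fM => fC fT [->|[s ->]].
  by left; apply/setP => c; rewrite !inE andbF.
suff -> : pretrunk (Tk _ W s) = pretrunk (Tk _ (cwords D) s) by apply: fT; right; exists s.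
by apply/setP => c; rewrite !inE; case cC: (c \in cwords C); rewrite //= fC ?imset_f.
Qed.

Lemma morphism_image : is_morphism C image f.
Proof. by split=> [c|T /pretrunk_image //]; apply: imset_f. Qed.

Lemma pretrunkK (T : {set {set 'I_(cdim D)}}) : T \subset W -> f @: pretrunk T = T.
Proof.
move=> TW; apply/setP => y; apply/imsetP/idP => [[c]|yT].
  by rewrite inE => /andP[_ ?] ->.
have /imsetP[c cC yE] := subsetP TW _ yT.
by exists c; rewrite // inE cC -yE yT.
Qed.

Lemma card_pretrunks : #|pretrunk @: trunks W| = #|trunks W|.
Proof.
apply: card_in_imset => T1 T2 /trunksP/trunk_subset T1W /trunksP/trunk_subset T2W E.
by rewrite -(pretrunkK T1W) -(pretrunkK T2W) E.
Qed.

Lemma pretrunks_subset : pretrunk @: trunks W \subset trunks (cwords C).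
Proof. by apply/subsetP => _ /imsetP[T /trunksP/pretrunk_image Tt ->]; apply/trunksP. Qed.

(* Equal trunk counts make every trunk of C a pullback of a trunk of the
   image, which is what the inverse of [f] needs to be a morphism. *)
Lemma code_iso_image : {in cwords C &, injective f} ->
  #|trunks W| = #|trunks (cwords C)| -> code_iso C image.
Proof.
move=> f_inj ntr.
have pre_onto : pretrunk @: trunks W = trunks (cwords C).
  by apply/eqP; rewrite eqEcard pretrunks_subset card_pretrunks ntr leqnn.
pose g d := odflt set0 [pick c in cwords C | f c == d].
have gf c : c \in cwords C -> g (f c) = c.
  move=> cC; rewrite /g; case: pickP => [c' /andP[c'C /eqP] | /(_ c)] /=.
    exact: f_inj.
  by rewrite cC eqxx.
have gW d : d \in W -> g d \in cwords C /\ f (g d) = d.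
  by case/imsetP=> c cC ->; rewrite gf.
exists f, g; split=> //; first exact: morphism_image; last by move=> d /gW[].
split=> [d /gW[] //|T /trunksP]; rewrite -pre_onto => /imsetP[U /trunksP Ut ->].
suff -> : [set d in W | g d \in pretrunk U] = U by [].
apply/setP => d; rewrite !inE; case dW: (d \in W) => /=; first by case: (gW d dW) => -> ->.
by apply/esym/negbTE; apply: contraFN dW; apply: (subsetP (trunk_subset Ut)).
Qed.

End MorphismImage.

Definition ncodewords (C : code) := #|cwords C|.
Definition ntrunks (C : code) := #|trunks (cwords C)|.

Definition shrinks (C C' : code) :=
  [/\ ncodewords C' <= ncodewords C, ntrunks C' <= ntrunks C &
      (ncodewords C' = ncodewords C -> ntrunks C' = ntrunks C -> code_iso C C')].

Lemma operation_shrinks C C' : operation C C' -> shrinks C C'.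
Proof.
case=> [{}C D f fM | {}C T Tt]; rewrite /shrinks /ncodewords /ntrunks /=.
  rewrite -(card_pretrunks _ _ f); split; first exact: leq_imset_card.
    exact/subset_leq_card/pretrunks_subset.
  move=> /eqP/imset_injP f_inj; rewrite (card_pretrunks _ _ f) => ntr.
  exact: code_iso_image fM f_inj ntr.
have TC := trunk_subset Tt.
split; first exact: subset_leq_card.
  by apply/subset_leq_card/subsetP => U /trunksP/(trunk_trunk Tt)/trunksP.
move=> nw _; have /eqP -> : T == cwords C by rewrite eqEcard TC nw leqnn.
by case: C T Tt TC nw => *; apply: code_iso_refl.
Qed.

Lemma reach_shrinks C E : reach C E -> shrinks C E.
Proof.
elim=> [C0 | C0 C1 C2 /operation_shrinks[w01 t01 iso01] _ [w12 t12 iso12]].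
  by split=> // _ _; apply: code_iso_refl.
split; [exact: leq_trans w12 w01 | exact: leq_trans t12 t01 |] => w02 t02.
have w10 : ncodewords C1 = ncodewords C0 by apply/eqP; rewrite eqn_leq w01 -w02.
have t10 : ntrunks C1 = ntrunks C0 by apply/eqP; rewrite eqn_leq t01 -t02.
apply: code_iso_trans (iso01 w10 t10) (iso12 _ _); [rewrite w10 | rewrite t10] => //.
Qed.

Lemma code_iso_sizes C D : code_iso C D ->
  ncodewords C = ncodewords D /\ ntrunks C = ntrunks D.
Proof.
move=> iCD; have [wCD tCD _] := reach_shrinks (reach_iso iCD).
have [wDC tDC _] := reach_shrinks (reach_iso (code_iso_sym iCD)).
by split; apply/eqP; rewrite eqn_leq ?wCD ?wDC ?tCD ?tDC.
Qed.

Lemma code_le_antisym C D : code_le D C -> code_le C D -> code_iso C D.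
Proof.
case=> [Y [RY iY]] [X [RX iX]].
have [wY tY] := code_iso_sizes iY; have [wX tX] := code_iso_sizes iX.
have [wCY tCY isoCY] := reach_shrinks RY; have [wDX tDX _] := reach_shrinks RX.
apply: code_iso_trans (isoCY _ _) iY; apply/eqP; rewrite eqn_leq.
  by rewrite wCY wY -wX wDX.
by rewrite tCY tY -tX tDX.
Qed.

Theorem proposition5p1 :
  ((forall C : code, code_iso C C) /\
   (forall C D : code, code_iso C D -> code_iso D C) /\
   (forall C D E : code, code_iso C D -> code_iso D E -> code_iso C E)) /\
  (forall C C' D D' : code, code_iso C C' -> code_iso D D' ->
     (code_le D C <-> code_le D' C')) /\
  (forall C : code, code_le C C) /\
  (forall C D E : code, code_le E D -> code_le D C -> code_le E C) /\
  (forall C D : code, code_le D C -> code_le C D -> code_iso C D).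
Proof.
split; first by split; [|split]; [apply: code_iso_refl|apply: code_iso_sym|apply: code_iso_trans].
split.
  move=> C C' D D' iC iD; split=> -[E [R iE]]; exists E; split.
  - exact: reach_trans (reach_iso (code_iso_sym iC)) R.
  - exact: code_iso_trans iE iD.
  - exact: reach_trans (reach_iso iC) R.
  - exact: code_iso_trans iE (code_iso_sym iD).
split; first by move=> C; exists C; split; [apply: reach_refl | apply: code_iso_refl].
split; last exact: code_le_antisym.
move=> C D E [X [RX iX]] [Y [RY iY]]; exists X; split=> //.
exact: reach_trans RY (reach_trans (reach_iso iY) RX).
Qed.
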